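(* Let $(\mathbf{L},\mathbf{R})\in\mathcal{P}_{\mathsf N}$ be centered and suppose it admits a dominance map. Then $\mathbf{L}\preceq^{\mathrm{PC}}\mathbf{R}$, i.e. $v\mathbf{L}\preceq v\mathbf{R}$ for every $v\in\mathbb{R}_+^{\mathsf N+1}$.
   Context: $\mathcal{P}_{\mathsf N}$ denotes the set of pairs $(\mathbf{L},\mathbf{R})$ of $(0,1)$-matrices, $\mathbf{L}$ of size $(\mathsf N+1)\times m_L$ and $\mathbf{R}$ of size $(\mathsf N+1)\times m_R$, such that some index $p\in[\mathsf N+1]$ has row $p$ of $\mathbf{L}$ and row $p$ of $\mathbf{R}$ both zero. $\mathbf{A}_{(i)}$ is the $i$-th row; $e$ the all-ones row vector; $|v|=\sum_k|v_k|$; $\le$ between vectors is componentwise. The pair is centered if it is balanced ($|\mathbf{L}_{(i)}|=|\mathbf{R}_{(i)}|$ for all $i$) and some row satisfies $\mathbf{L}_{(i)}=e=\mathbf{R}_{(i)}$ (so $m_L=m_R=m$). A dominance map is $f:\{0,1\}^{m}\to\{0,1\}^{m}$ with $|u|=|f(u)|$ and $\mathbf{L}u^T\le\mathbf{R}f(u)^T$ for all $u$. For $x,y\in\mathbb{R}^d$, $x\preceq y$ (majorization) means $\sum_{n=1}^k x^\downarrow_n\le\sum_{n=1}^k y^\downarrow_n$ for $k=1,\dots,d-1$ and $\sum_{n=1}^d x_n=\sum_{n=1}^d y_n$, where $x^\downarrow_n$ is the $n$-th largest component. $\mathbb{R}_+$ denotes the nonnegative reals, and $v$ is a row vector. *)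

From HB Require Import structures.
From mathcomp Require Import all_boot all_order all_algebra.
From mathcomp Require Import reals.
Set Implicit Arguments. Unset Strict Implicit. Unset Printing Implicit Defensive.
Import Order.TTheory GRing.Theory Num.Theory.
Local Open Scope ring_scope.

Section Defs.
Variable R : realType.

Definition zero_one_mx (n m : nat) (A : 'M[R]_(n, m)) : Prop :=
  forall i j, A i j = 0 \/ A i j = 1.

Definition l1norm (m : nat) (v : 'rV[R]_m) : R := \sum_(k < m) `|v 0 k|.

Definition ones_row (m : nat) : 'rV[R]_m := const_mx 1.

(* membership in P_N (with m_L = m_R = m) *)
Definition in_PN (N m : nat) (L Rm : 'M[R]_(N.+1, m)) : Prop :=
  [/\ zero_one_mx L, zero_one_mx Rm &
      exists p : 'I_N.+1, row p L = 0 /\ row p Rm = 0].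

Definition balanced (N m : nat) (L Rm : 'M[R]_(N.+1, m)) : Prop :=
  forall i, l1norm (row i L) = l1norm (row i Rm).

Definition centered (N m : nat) (L Rm : 'M[R]_(N.+1, m)) : Prop :=
  balanced L Rm /\ exists i, row i L = ones_row m /\ row i Rm = ones_row m.

Definition bvec (m : nat) (u : {ffun 'I_m -> bool}) : 'rV[R]_m :=
  \row_j (u j)%:R.

Definition le_cV (n : nat) (x y : 'cV[R]_n) : Prop := forall i, x i 0 <= y i 0.

Definition dominance_map (N m : nat) (L Rm : 'M[R]_(N.+1, m))
  (f : {ffun 'I_m -> bool} -> {ffun 'I_m -> bool}) : Prop :=
  forall u, l1norm (bvec u) = l1norm (bvec (f u)) /\
            le_cV (L *m (bvec u)^T) (Rm *m (bvec (f u))^T).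

Definition decr (d : nat) (x : 'rV[R]_d) : seq R :=
  sort (fun a b : R => b <= a) [seq x 0 i | i <- enum 'I_d].

Definition majorized (d : nat) (x y : 'rV[R]_d) : Prop :=
  (forall k, (1 <= k <= d.-1)%N ->
     \sum_(n < k) (decr x)`_n <= \sum_(n < k) (decr y)`_n) /\
  \sum_(n < d) x 0 n = \sum_(n < d) y 0 n.

End Defs.

From HB Require Import structures.
From mathcomp Require Import all_boot all_order all_algebra.
From mathcomp Require Import reals.
Import Order.TTheory GRing.Theory Num.Theory.
Set Implicit Arguments. Unset Strict Implicit.
Local Open Scope ring_scope.

(* The partial sums of the decreasing rearrangement are Ky Fan maxima:
   \sum_(n < k) (decr x)`_n is the largest sum of x over a k-element set of
   coordinates, and it is attained.  Take A attaining the top-k sum of vL and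
   push its indicator u through the dominance map: since v >= 0,
   vL u^T <= vR f(u)^T, and f(u) is again the indicator of a k-element set,
   whose vR-sum is at most the top-k sum of vR.  The totals agree because
   balanced (0,1)-rows have equal row sums. *)

Section DecreasingRearrangement.
Variable R : realType.

Lemma sum_nth_take (s : seq R) k : (k <= size s)%N ->
  \sum_(n < k) s`_n = \sum_(a <- take k s) a.
Proof.
move=> le_ks; rewrite (big_nth 0) size_takel // big_mkord.
by apply: eq_bigr => n _; rewrite nth_take.
Qed.

Lemma size_decr d (x : 'rV[R]_d) : size (decr x) = d.
Proof. by rewrite /decr size_sort size_map size_enum_ord. Qed.

Lemma perm_decr d (x : 'rV[R]_d) : perm_eq (decr x) [seq x 0 i | i <- enum 'I_d].
Proof. by rewrite /decr perm_sort. Qed.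

Lemma decr_sorted d (x : 'rV[R]_d) : sorted >=%R (decr x).
Proof. by apply: sort_sorted => a b; apply: le_total. Qed.

Lemma nth_decr_le d (x : 'rV[R]_d) i j :
  (i <= j < d)%N -> (decr x)`_j <= (decr x)`_i.
Proof.
case/andP=> le_ij lt_jd.
apply: (sorted_leq_nth (rev_trans le_trans) (@lexx _ _) 0 (decr_sorted x));
  by rewrite ?inE ?size_decr ?(leq_ltn_trans le_ij lt_jd).
Qed.

Lemma sum_decr_attained d (x : 'rV[R]_d) k : (k <= d)%N ->
  exists A : {set 'I_d},
    #|A| = k /\ \sum_(n < k) (decr x)`_n = \sum_(j in A) x 0 j.
Proof.
move=> le_kd; set idx := sort (relpre (x 0) >=%R) (enum 'I_d).
have decrE : decr x = [seq x 0 j | j <- idx] by rewrite /decr sort_map.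
have uniq_top : uniq (take k idx) by rewrite take_uniq // sort_uniq enum_uniq.
have size_top : size (take k idx) = k.
  by rewrite size_takel // size_sort size_enum_ord.
exists [set j in take k idx]; split; first by rewrite cardsE (card_uniqP uniq_top).
rewrite sum_nth_take ?size_decr // decrE -map_take big_map big_uniq //=.
by apply: eq_bigl => j; rewrite inE.
Qed.

(* Valid for every threshold c; for c the k-th largest entry the bound is
   attained by the top k entries (sum_decr_excess). *)
Lemma sum_subset_le_excess d (x : 'rV[R]_d) (A : {set 'I_d}) c :
  \sum_(j in A) x 0 j <= #|A|%:R * c + \sum_j Num.max (x 0 j - c) 0.
Proof.
have excess_ge0 j : 0 <= Num.max (x 0 j - c) 0 by rewrite le_max lexx orbT.
apply: (@le_trans _ _ (\sum_(j in A) (c + Num.max (x 0 j - c) 0))).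
  by apply: ler_sum => j _; rewrite -lerBlDl le_max lexx.
rewrite big_split /= sumr_const mulr_natl lerD2l [leRHS](bigID (mem A)) /=.
by rewrite lerDl sumr_ge0.
Qed.

Lemma sum_decr_excess d (x : 'rV[R]_d) k : (0 < k <= d)%N ->
  let c := (decr x)`_k.-1 in
  \sum_(n < k) (decr x)`_n = k%:R * c + \sum_j Num.max (x 0 j - c) 0.
Proof.
case/andP=> k_gt0 le_kd c.
have -> : \sum_j Num.max (x 0 j - c) 0 = \sum_(a <- decr x) Num.max (a - c) 0.
  by rewrite (perm_big _ (perm_decr x)) big_map big_enum.
rewrite (big_nth 0) size_decr (@big_cat_nat _ _ _ k 0 d) //=.
rewrite [\sum_(k <= n < d) _]big1_seq ?addr0; last first.
  move=> n /andP[_]; rewrite mem_index_iota => /andP[le_kn lt_nd].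
  apply/max_idPr; rewrite subr_le0 nth_decr_le //.
  by rewrite lt_nd (leq_trans (leq_pred k) le_kn).
rewrite (eq_big_nat _ _ (F2 := fun n => (decr x)`_n - c)); last first.
  move=> n /andP[_ lt_nk]; apply/max_idPl; rewrite subr_ge0 nth_decr_le //.
  by rewrite -ltnS prednK // lt_nk (leq_trans _ le_kd) // ltn_predL.
by rewrite sumrB sumr_const_nat subn0 big_mkord addrC mulr_natl subrK.
Qed.

Lemma sum_subset_le_sum_decr d (x : 'rV[R]_d) (A : {set 'I_d}) :
  \sum_(j in A) x 0 j <= \sum_(n < #|A|) (decr x)`_n.
Proof.
have [A0 | A_gt0] := posnP #|A|.
  by rewrite A0 big_ord0 (cards0_eq A0) big_set0.
have lt_Ad : (0 < #|A| <= d)%N by rewrite A_gt0 -[X in (_ <= X)%N]card_ord max_card.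
by rewrite (sum_decr_excess x lt_Ad) sum_subset_le_excess.
Qed.
End DecreasingRearrangement.

Section ZeroOneMatrices.
Variable R : realType.

Lemma mulmx_bvec_tr d (x : 'rV[R]_d) (u : {ffun 'I_d -> bool}) :
  (x *m (bvec R u)^T) 0 0 = \sum_(j | u j) x 0 j.
Proof.
rewrite mxE [RHS]big_mkcond; apply: eq_bigr => j _.
by rewrite !mxE; case: (u j); rewrite ?mulr1 ?mulr0.
Qed.

Lemma l1norm_bvec d (u : {ffun 'I_d -> bool}) :
  l1norm (bvec R u) = #|[set j | u j]|%:R :> R.
Proof.
rewrite /l1norm (eq_bigr (fun j => (u j)%:R)) => [|j _]; last by rewrite mxE normr_nat.
by rewrite -sumr_const [RHS]big_mkcond; apply: eq_bigr => j _; rewrite inE; case: (u j).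
Qed.

Lemma mulmx_ones_tr n d (A : 'M[R]_(n, d)) i :
  (A *m (ones_row R d)^T) i 0 = \sum_j A i j.
Proof. by rewrite mxE; apply: eq_bigr => j _; rewrite !mxE mulr1. Qed.

Lemma l1norm_row_zero_one n d (A : 'M[R]_(n, d)) i :
  zero_one_mx A -> l1norm (row i A) = (A *m (ones_row R d)^T) i 0.
Proof.
move=> A01; rewrite mulmx_ones_tr; apply: eq_bigr => j _.
by rewrite mxE; case: (A01 i j) => ->; rewrite ?normr0 ?normr1.
Qed.

Lemma mulmx_le_cV_nneg n (v : 'rV[R]_n) (a b : 'cV[R]_n) :
  (forall i, 0 <= v 0 i) -> le_cV a b -> (v *m a) 0 0 <= (v *m b) 0 0.
Proof. by move=> v_ge0 le_ab; rewrite !mxE; apply: ler_sum => i _; rewrite ler_wpM2l. Qed.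
End ZeroOneMatrices.

Section Dominance.
Variables (R : realType) (N m : nat) (L Rm : 'M[R]_(N.+1, m)).

Lemma balanced_row_sums : zero_one_mx L -> zero_one_mx Rm -> balanced L Rm ->
  L *m (ones_row R m)^T = Rm *m (ones_row R m)^T.
Proof.
move=> L01 Rm01 bal; apply/matrixP => i j; rewrite [j]ord1.
by rewrite -(l1norm_row_zero_one i L01) -(l1norm_row_zero_one i Rm01) bal.
Qed.

Lemma dominance_subset_sum f (v : 'rV[R]_N.+1) (A : {set 'I_m}) :
  dominance_map L Rm f -> (forall i, 0 <= v 0 i) ->
  exists B : {set 'I_m},
    #|B| = #|A| /\ \sum_(j in A) (v *m L) 0 j <= \sum_(j in B) (v *m Rm) 0 j.
Proof.
move=> dom_f v_ge0; set u := [ffun j => j \in A].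
have [l1_fu le_fu] := dom_f u.
exists [set j | f u j]; split.
  move: l1_fu; rewrite !l1norm_bvec => /eqP; rewrite eqr_nat => /eqP <-.
  by apply: eq_card => j; rewrite inE ffunE.
have -> : \sum_(j in A) (v *m L) 0 j = (v *m L *m (bvec R u)^T) 0 0.
  by rewrite mulmx_bvec_tr; apply: eq_bigl => j; rewrite ffunE.
have -> : \sum_(j in [set j | f u j]) (v *m Rm) 0 j =
          (v *m Rm *m (bvec R (f u))^T) 0 0.
  by rewrite mulmx_bvec_tr; apply: eq_bigl => j; rewrite inE.
by rewrite -!mulmxA mulmx_le_cV_nneg.
Qed.
End Dominance.

Theorem theorem3 (R : realType) (N m : nat) (L Rm : 'M[R]_(N.+1, m)) :
  in_PN L Rm -> centered L Rm ->
  (exists f, dominance_map L Rm f) ->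
  forall v : 'rV[R]_(N.+1), (forall i, 0 <= v 0 i) ->
    majorized (v *m L) (v *m Rm).
Proof.
case=> L01 Rm01 _ [bal _] [f dom_f] v v_ge0; split; last first.
  rewrite -!(mulmx_ones_tr _ 0) -!mulmxA.
  by rewrite (balanced_row_sums L01 Rm01 bal).
move=> k /andP[_ le_km]; have le_km' := leq_trans le_km (leq_pred m).
have [A [card_A ->]] := sum_decr_attained (v *m L) le_km'.
have [B [card_B le_AB]] := dominance_subset_sum A dom_f v_ge0.
by rewrite (le_trans le_AB) // -card_A -card_B sum_subset_le_sum_decr.
Qed.
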